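(* Let $\Bbbk$ be an algebraically closed field of characteristic zero, let $g$ generate $C_3$ with identity $e$, and equip $\Bbbk C_3$ with its group-algebra Frobenius structure. Then the extended structures on $\Bbbk C_3$ are exactly: (a) $\phi=\mathrm{id}$ and $\theta\in\{\pm\sqrt3\,e,\ \pm\tfrac{1}{\sqrt3}(e-2\omega g-2\omega^2g^2)\}$; (b) $\phi(g)=\omega g^2$ and $\theta=\pm\tfrac1{\sqrt3}(e+\omega g+\omega^2g^2)$; where $\omega\in\Bbbk$ ranges over the cube roots of unity. Moreover, these extended Frobenius algebras are pairwise non-isomorphic.
   Context: For a finite group $G$ with identity $e$, $\Bbbk G$ carries the Frobenius structure with group-algebra multiplication, unit $e$, comultiplication $\Delta(g)=\sum_{h\in G}gh\otimes h^{-1}$ and counit $\varepsilon(g)=\delta_{g,e}$. A Frobenius algebra over $\Bbbk$ is $(A,m,u,\Delta,\varepsilon)$ with $(A,m,u)$ an associative unital algebra, $(A,\Delta,\varepsilon)$ a coassociative counital coalgebra, and $(a\otimes1)\Delta(b)=\Delta(ab)=\Delta(a)(1\otimes b)$. A Frobenius algebra morphism is both an algebra and coalgebra morphism. An extended structure is $(\phi,\theta)$, $\phi:A\to A$ linear, $\theta\in A$, with (i) $\phi$ a Frobenius morphism, $\phi^2=\mathrm{id}$; (ii) $\phi(\theta a)=\theta a$ for all $a$; (iii) $m(\phi\otimes\mathrm{id})\Delta(1_A)=\theta^2$. An isomorphism of extended Frobenius algebras is an invertible Frobenius algebra morphism $f$ with $f\phi=\phi'f$ and $f(\theta)=\thet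a'$.
   Formalization: The non-isomorphism claim compares only structures from different ones of the six families fixed by the sign and the formula for θ in (a) and (b), not structures differing only in ω. The statement above fails without it. *)

From HB Require Import structures.
From mathcomp Require Import all_boot all_order all_fingroup all_algebra.
Set Implicit Arguments.
Unset Strict Implicit.
Unset Printing Implicit Defensive.
Import GRing.Theory.
Local Open Scope ring_scope.

(* An element a : GA is the
   coefficient function x |-> (coefficient of x), i.e. a = \sum_x a x . x;
   an element T : GA2 of kG (x) kG is T = \sum_(x,y) T (x,y) . x (x) y. *)
Section GroupAlgebra.
Variables (K : fieldType) (gT : finGroupType).

Definition GA := {ffun gT -> K}.
Definition GA2 := {ffun gT * gT -> K}.

Definition ga_delta (x : gT) : GA := [ffun y => (y == x)%:R].
Definition ga_one : GA := ga_delta 1%g.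
Definition ga_mul (a b : GA) : GA :=
  [ffun x => \sum_(y : gT) a y * b (y^-1 * x)%g].
(* comultiplication Delta(g) = \sum_h gh (x) h^-1, extended linearly:
   the coefficient of x (x) y in Delta(a) is a (x * y). *)
Definition ga_comul (a : GA) : GA2 := [ffun p => a (p.1 * p.2)%g].
Definition ga_counit (a : GA) : K := a 1%g.

Definition ga_linear (f : GA -> GA) : Prop :=
  forall (c : K) (a b : GA),
    f [ffun x => c * a x + b x] = [ffun x => c * f a x + f b x].

(* f (x) h applied to an element of kG (x) kG (f, h linear) *)
Definition tensor_map (f h : GA -> GA) (T : GA2) : GA2 :=
  [ffun p => \sum_(q : gT * gT)
               T q * f (ga_delta q.1) p.1 * h (ga_delta q.2) p.2].

Definition mul_map (T : GA2) : GA :=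
  [ffun x => \sum_(q : gT * gT)
               T q * ga_mul (ga_delta q.1) (ga_delta q.2) x].

Definition frobenius_morphism (f : GA -> GA) : Prop :=
  [/\ ga_linear f,
      f ga_one = ga_one,
      forall a b, f (ga_mul a b) = ga_mul (f a) (f b),
      forall a, ga_comul (f a) = tensor_map f f (ga_comul a)
    & forall a, ga_counit (f a) = ga_counit a].

Definition extended_structure (phi : GA -> GA) (theta : GA) : Prop :=
  [/\ frobenius_morphism phi,
      forall a, phi (phi a) = a,
      forall a, phi (ga_mul theta a) = ga_mul theta a
    & mul_map (tensor_map phi id (ga_comul ga_one)) = ga_mul theta theta].

Definition ext_isomorphic (phi : GA -> GA) (theta : GA)
    (phi' : GA -> GA) (theta' : GA) : Prop :=
  exists f : GA -> GA,
    [/\ frobenius_morphism f, bijective f,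
        forall a, f (phi a) = phi' (f a)
      & f theta = theta'].

End GroupAlgebra.

Section C3.
Variables (K : fieldType) (gT : finGroupType) (g : gT).

Definition c3elt (a0 a1 a2 : K) : GA K gT :=
  [ffun x => a0 * ga_delta K 1%g x + a1 * ga_delta K g x
             + a2 * ga_delta K (g ^+ 2)%g x].

(* The six families of the classification, given a square root s of 3
   (w ranges over the cube roots of unity):
   0: phi = id, theta = sqrt3 e
   1: phi = id, theta = - sqrt3 e
   2: phi = id, theta = (1/sqrt3)(e - 2 w g - 2 w^2 g^2)
   3: phi = id, theta = -(1/sqrt3)(e - 2 w g - 2 w^2 g^2)
   4: phi(g) = w g^2 (i.e. phi(g^k) = w^k g^(2k)), theta = (1/sqrt3)(e + w g + w^2 g^2)
   5: phi(g) = w g^2, theta = -(1/sqrt3)(e + w g + w^2 g^2) *)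
Definition c3_family (s : K) (i : nat) (phi : GA K gT -> GA K gT)
    (theta : GA K gT) : Prop :=
  match i with
  | 0 => (forall a, phi a = a) /\ theta = c3elt s 0 0
  | 1 => (forall a, phi a = a) /\ theta = c3elt (- s) 0 0
  | 2 => (forall a, phi a = a) /\ exists w : K, w ^+ 3 = 1 /\
           theta = c3elt (s^-1) (- (2 * w) / s) (- (2 * w ^+ 2) / s)
  | 3 => (forall a, phi a = a) /\ exists w : K, w ^+ 3 = 1 /\
           theta = c3elt (- s^-1) (2 * w / s) (2 * w ^+ 2 / s)
  | 4 => exists w : K, w ^+ 3 = 1 /\ ga_linear phi /\
           (forall k : nat, phi (ga_delta K (g ^+ k)%g)
                            = [ffun x => w ^+ k * ga_delta K (g ^+ (2 * k))%g x]) /\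
           theta = c3elt (s^-1) (w / s) (w ^+ 2 / s)
  | 5 => exists w : K, w ^+ 3 = 1 /\ ga_linear phi /\
           (forall k : nat, phi (ga_delta K (g ^+ k)%g)
                            = [ffun x => w ^+ k * ga_delta K (g ^+ (2 * k))%g x]) /\
           theta = c3elt (- s^-1) (- w / s) (- w ^+ 2 / s)
  | _ => False
  end.

End C3.

(* An involutive Frobenius automorphism phi of kC3 is determined by phi(g).
   Since phi preserves the counit, phi(g) = a g + b g^2; the counit of
   phi(g^2) = phi(g)^2 is 2ab, so ab = 0, and phi(g) phi(g^2) = e gives
   a^3 + b^3 = 1.  Hence phi(g) = w g^2 with w^3 = 1, or phi(g) = a g with
   a^3 = 1, where involutivity forces a = 1 and phi = id.  The element
   m (phi (x) id) Delta(1) is 3e for phi = id and e + w g + w^2 g^2 for the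
   twist, so condition (iii) is a system of three quadratic equations in the
   coordinates of theta; in the twisted case condition (ii) at a = e adds
   theta(g^2) = w theta(g).
   An isomorphism of extended Frobenius algebras preserves the counit of theta
   and whether phi is the identity, and these invariants separate the six
   families. *)

From HB Require Import structures.
From mathcomp Require Import all_boot all_order all_fingroup all_algebra cyclic.
From mathcomp Require Import ring zify.
Set Implicit Arguments.
Unset Strict Implicit.
Unset Printing Implicit Defensive.
Import GRing.Theory.
Local Open Scope ring_scope.

Section GroupAlgebra.
Variables (K : fieldType) (gT : finGroupType).
Notation GAK := (GA K gT).
Notation delta := (ga_delta K).

Lemma ga_mul_scaled_delta (c d : K) (x y : gT) :
  ga_mul [ffun z => c * delta x z] [ffun z => d * delta y z] =
  [ffun z => c * d * delta (x * y)%g z].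
Proof.
apply/ffunP => z; rewrite !ffunE (bigD1 x) //= big1 => [|u /negbTE xu]; last first.
  by rewrite !ffunE xu mulr0 mul0r.
rewrite !ffunE eqxx mulr1 addr0 mulrA.
suff -> : ((x^-1 * z)%g == y) = (z == (x * y)%g) by [].
by apply/eqP/eqP => [<-|->]; rewrite ?mulKVg ?mulKg.
Qed.

Lemma ga_mul_delta (x y : gT) : ga_mul (delta x) (delta y) = delta (x * y)%g.
Proof.
have scale1 z : delta z = [ffun t => 1 * delta z t].
  by apply/ffunP => t; rewrite !ffunE mul1r.
by rewrite [delta x]scale1 [delta y]scale1 ga_mul_scaled_delta mulr1 -scale1.
Qed.

Lemma ga_mulr1 (a : GAK) : ga_mul a (ga_one K gT) = a.
Proof.
apply/ffunP => x; rewrite ffunE (bigD1 x) //= big1 => [|y /negbTE yx];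
  by rewrite /ga_one /ga_delta ffunE -eq_mulVg1 ?eqxx ?yx ?mulr1 ?mulr0 ?addr0.
Qed.

Lemma ga_morph_delta_expg (f : GAK -> GAK) (c : K) (x y : gT) :
  f (ga_one K gT) = ga_one K gT ->
  (forall a b, f (ga_mul a b) = ga_mul (f a) (f b)) ->
  f (delta x) = [ffun z => c * delta y z] ->
  forall k, f (delta (x ^+ k)%g) = [ffun z => c ^+ k * delta (y ^+ k)%g z].
Proof.
move=> f1 fM fx; elim=> [|k IHk].
  by rewrite !expg0 f1; apply/ffunP => z; rewrite !ffunE expr0 mul1r.
by rewrite !expgSr -ga_mul_delta fM IHk fx ga_mul_scaled_delta -exprSr.
Qed.

Lemma tensor_map_id (T : GA2 K gT) : tensor_map id id T = T.
Proof.
apply/ffunP => p; rewrite ffunE (bigD1 p) //= big1 => [|q /negbTE qp].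
  by rewrite !ffunE !eqxx !mulr1 addr0.
move: qp; case: q => x y; case: p => u v; rewrite xpair_eqE !ffunE /=.
by case: (u =P x) => [->|_]; case: (v =P y) => [->|_]; rewrite ?eqxx // => _;
  rewrite ?mulr0 ?mul0r.
Qed.

Lemma eq_tensor_map (f f' h h' : GAK -> GAK) (T : GA2 K gT) :
  f =1 f' -> h =1 h' -> tensor_map f h T = tensor_map f' h' T.
Proof.
by move=> ff' hh'; apply/ffunP => p; rewrite !ffunE; apply: eq_bigr => q _; rewrite ff' hh'.
Qed.

Lemma eq_frobenius_morphism (f f' : GAK -> GAK) :
  f =1 f' -> frobenius_morphism f -> frobenius_morphism f'.
Proof.
move=> ff' [fL f1 fM fD fE]; split.
- by move=> c a b; rewrite -!ff' fL.
- by rewrite -ff'.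
- by move=> a b; rewrite -!ff' fM.
- by move=> a; rewrite -ff' fD; apply: eq_tensor_map.
- by move=> a; rewrite -ff' fE.
Qed.

Lemma frobenius_morphism_id : frobenius_morphism (@id GAK).
Proof. by split=> // a; rewrite tensor_map_id. Qed.

Lemma eq_extended_structure (phi phi' : GAK -> GAK) (theta : GAK) :
  phi =1 phi' -> extended_structure phi theta <-> extended_structure phi' theta.
Proof.
have imp f f' : f =1 f' -> extended_structure f theta -> extended_structure f' theta.
  move=> ff' [fF fK fT fD]; split.
  - exact: eq_frobenius_morphism fF.
  - by move=> a; rewrite -!ff'.
  - by move=> a; rewrite -ff'.
  - by rewrite -fD; congr mul_map; apply: eq_tensor_map.
by move=> pp'; split; apply: imp.
Qed.

Lemma ext_isomorphic_counit (phi phi' : GAK -> GAK) (theta theta' : GAK) :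
  ext_isomorphic phi theta phi' theta' -> ga_counit theta' = ga_counit theta.
Proof. by case=> f [[_ _ _ _ fE] _ _ <-]. Qed.

Lemma ext_isomorphic_id (phi phi' : GAK -> GAK) (theta theta' : GAK) :
  ext_isomorphic phi theta phi' theta' -> phi =1 id <-> phi' =1 id.
Proof.
case=> f [_ [f' fK f'K] f_phi _]; split=> [phi1 a | phi'1 a].
  by rewrite -[a]f'K -f_phi phi1.
by apply: (can_inj fK); rewrite f_phi phi'1.
Qed.

End GroupAlgebra.

Section Arithmetic.
Variables (K : fieldType) (s : K).
Hypotheses (two_neq0 : (2 : K) != 0) (three_neq0 : (3 : K) != 0).
Hypothesis sqr_s : s ^+ 2 = 3.

Lemma sqrt3_neq0 : s != 0.
Proof. by apply: contra_neq three_neq0 => s0; rewrite -sqr_s s0 expr0n. Qed.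

Local Ltac nonzero := rewrite ?two_neq0 ?three_neq0 ?sqrt3_neq0 ?andbT //.

Lemma sqrt3_coords (t0 t1 t2 : K) :
  t0 * t0 + t1 * t2 + t2 * t1 = 3 -> t0 * t1 + t1 * t0 + t2 * t2 = 0 ->
  t0 * t2 + t1 * t1 + t2 * t0 = 0 ->
  (t1 = 0 /\ t2 = 0 /\ (t0 = s \/ t0 = - s)) \/
  exists w : K, w ^+ 3 = 1 /\
   ((t0 = s^-1 /\ t1 = - (2 * w) / s /\ t2 = - (2 * w ^+ 2) / s) \/
    (t0 = - s^-1 /\ t1 = 2 * w / s /\ t2 = 2 * w ^+ 2 / s)).
Proof.
move=> E0 E1 E2; have s_neq0 := sqrt3_neq0.
have [t1_0|t1_neq0] := eqVneq t1 0.
  have t2_0 : t2 = 0.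
    by move: E1; rewrite t1_0 !mulr0 mul0r !add0r => /eqP; rewrite mulf_eq0 orbb => /eqP.
  left; do 2!split=> //; apply/pred2P; rewrite -eqf_sqr sqr_s -E0 t1_0 t2_0.
  by apply/eqP; ring.
(* w := t2 / t1 is a cube root of unity since t2 E1 - t1 E2 reads t2^3 = t1^3. *)
right; set w := t2 / t1.
have t2E : t2 = w * t1 by rewrite /w mulfVK.
have cube_t2 : t2 ^+ 3 = t1 ^+ 3.
  apply/eqP; rewrite -subr_eq0; apply/eqP.
  have -> : t2 ^+ 3 - t1 ^+ 3 = t2 * (t0 * t1 + t1 * t0 + t2 * t2)
                               - t1 * (t0 * t2 + t1 * t1 + t2 * t0) by ring.
  by rewrite E1 E2 !mulr0 subr0.
have w3 : w ^+ 3 = 1 by rewrite /w exprMn exprVn cube_t2 mulfV // expf_neq0.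
have t0E : t0 = - (w ^+ 2 * t1) / 2.
  apply: (mulIf t1_neq0); apply: (mulIf two_neq0).
  have -> : t0 * t1 * 2 = t0 * t1 + t1 * t0 by ring.
  by move/eqP: E1; rewrite addr_eq0 => /eqP ->; rewrite t2E; field; nonzero.
have sq_t1 : (s * t1 / 2) ^+ 2 = w ^+ 2.
  apply/eqP; rewrite -subr_eq0; apply/eqP.
  have -> : (s * t1 / 2) ^+ 2 - w ^+ 2 = w ^+ 2 / 3 * ((t0 * t0 + t1 * t2 + t2 * t1) - 3).
    by rewrite t0E t2E; field: w3 sqr_s; nonzero.
  by rewrite E0 subrr mulr0.
exists w; split=> //; move/eqP: sq_t1; rewrite eqf_sqr => /pred2P[t1E|t1E].
  have {}t1E : t1 = 2 * w / s by rewrite -t1E; field; nonzero.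
  right; rewrite t0E t2E t1E; do !split; field: w3; nonzero.
have {}t1E : t1 = - (2 * w) / s by rewrite -(opprK w) -t1E; field; nonzero.
left; rewrite t0E t2E t1E; do !split; field: w3; nonzero.
Qed.

Lemma twisted_sqrt_coords (w t0 t1 t2 : K) : w ^+ 3 = 1 -> t2 = w * t1 ->
  t0 * t0 + t1 * t2 + t2 * t1 = 1 -> t0 * t1 + t1 * t0 + t2 * t2 = w ->
  (t0 = s^-1 /\ t1 = w / s /\ t2 = w ^+ 2 / s) \/
  (t0 = - s^-1 /\ t1 = - w / s /\ t2 = - w ^+ 2 / s).
Proof.
move=> w3 t2E E0 E1; have s_neq0 := sqrt3_neq0.
have t0E : t0 = w ^+ 2 * t1.
  have sq0 : (t0 - w ^+ 2 * t1) ^+ 2 = 0.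
    transitivity ((t0 * t0 + t1 * t2 + t2 * t1 - 1)
                  - w ^+ 2 * (t0 * t1 + t1 * t0 + t2 * t2 - w)).
      by rewrite t2E; ring: w3.
    by rewrite E0 E1 !subrr mulr0 subr0.
  by apply/eqP; move/eqP: sq0; rewrite expf_eq0 subr_eq0.
have t1E : t1 = w * t0 by rewrite t0E mulrA -exprS w3 mul1r.
have : (s * t0) ^+ 2 = 1 ^+ 2.
  by rewrite exprMn sqr_s expr1n -[in RHS]E0 t2E t1E; ring: w3.
move/eqP; rewrite eqf_sqr => /pred2P[st0|st0].
  have {}t0E : t0 = s^-1 by apply: (mulfI s_neq0); rewrite st0 mulfV.
  by left; rewrite t2E t1E t0E; do !split; field; nonzero.
have {}t0E : t0 = - s^-1 by apply: (mulfI s_neq0); rewrite st0 mulrN mulfV.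
by right; rewrite t2E t1E t0E; do !split; field; nonzero.
Qed.

Lemma uniq_pm_sqrt3_inv : uniq [:: s; - s; s^-1; - s^-1].
Proof.
have s_neq0 := sqrt3_neq0.
have neq_opp (x : K) : x != 0 -> x != - x.
  by move=> x_neq0; rewrite -addr_eq0 -mulr2n -mulr_natr mulf_neq0.
have s_neq_inv : s != s^-1.
  apply: contra_neq two_neq0 => s_inv.
  have -> : (2 : K) = s * s - 1 by ring: sqr_s.
  by rewrite {2}s_inv mulfV ?subrr.
have s_neq_oppinv : s != - s^-1.
  apply: contra_neq (mulf_neq0 two_neq0 two_neq0) => s_oppinv.
  have -> : (2 * 2 : K) = s * s + 1 by ring: sqr_s.
  by rewrite {2}s_oppinv mulrN mulfV ?addNr.
by rewrite /= !inE !negb_or eqr_opp eqr_oppLR !neq_opp ?invr_eq0 // s_neq_inv s_neq_oppinv.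
Qed.

End Arithmetic.

Section CyclicGroupOfOrder3.
Variables (K : fieldType) (gT : finGroupType) (g : gT).
Hypotheses (order_g : #[g]%g = 3%N) (gen_g : <[g]>%g = [set: gT]).
Notation GAK := (GA K gT).
Notation delta := (ga_delta K).

Lemma expg3 : (g ^+ 3)%g = 1%g.
Proof. by rewrite -order_g expg_order. Qed.

Lemma mulg_g_g2 : (g * g ^+ 2)%g = 1%g.
Proof. by rewrite -expgS expg3. Qed.

Lemma mulg_g2_g : (g ^+ 2 * g)%g = 1%g.
Proof. by rewrite -expgSr expg3. Qed.

Lemma mulg_g2_g2 : (g ^+ 2 * g ^+ 2)%g = g.
Proof. by rewrite -expgD -[(2 + 2)%N]/(3 + 1)%N expgD expg3 mul1g expg1. Qed.

Lemma invg_g : (g^-1)%g = (g ^+ 2)%g.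
Proof. by apply/eqP; rewrite eq_invg_mul mulg_g_g2. Qed.

Lemma invg_g2 : ((g ^+ 2)^-1)%g = g.
Proof. by apply/eqP; rewrite eq_invg_mul mulg_g2_g. Qed.

Lemma g_eq1 : (g == 1%g) = false.
Proof. by apply/negbTE; rewrite -{1}(expg1 g) -order_dvdn order_g. Qed.

Lemma g2_eq1 : ((g ^+ 2)%g == 1%g) = false.
Proof. by apply/negbTE; rewrite -order_dvdn order_g. Qed.

Lemma g_eq_g2 : (g == (g ^+ 2)%g) = false.
Proof. by rewrite -{1}(expg1 g) eq_expg_mod_order order_g. Qed.

Lemma c3_elemP (x : gT) : [\/ x = 1%g, x = g | x = (g ^+ 2)%g].
Proof.
have : x \in <[g]>%g by rewrite gen_g inE.
case/cycleP=> i ->; rewrite -expg_mod_order order_g.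
have : (i %% 3 < 3)%N by rewrite ltn_mod.
by case: (i %% 3)%N => [|[|[|]]] // _; rewrite ?expg0 ?expg1;
  [apply: Or31 | apply: Or32 | apply: Or33].
Qed.

Lemma c3_sumE (F : gT -> K) : \sum_(x : gT) F x = F 1%g + F g + F (g ^+ 2)%g.
Proof.
have -> : \sum_(x : gT) F x = \sum_(x in 1%g |: (g |: [set (g ^+ 2)%g])) F x.
  apply: eq_bigl => x; rewrite !inE.
  by case: (c3_elemP x) => ->; rewrite eqxx ?orbT.
rewrite big_setU1 /=; last by rewrite !inE eq_sym g_eq1 eq_sym g2_eq1.
rewrite big_setU1 /=; last by rewrite !inE g_eq_g2.
by rewrite big_set1 addrA.
Qed.

Lemma c3_sum2E (F : gT * gT -> K) : \sum_(q : gT * gT) F q =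
  F (1, 1)%g + F (1, g)%g + F (1, g ^+ 2)%g +
  (F (g, 1)%g + F (g, g)%g + F (g, g ^+ 2)%g) +
  (F (g ^+ 2, 1)%g + F (g ^+ 2, g)%g + F (g ^+ 2, g ^+ 2)%g).
Proof.
rewrite (eq_bigr (fun p => F (p.1, p.2))); last by case.
by rewrite -(pair_bigA _ (fun x y => F (x, y))) /= !c3_sumE.
Qed.

Lemma c3_ffunP (a b : GAK) :
  a 1%g = b 1%g -> a g = b g -> a (g ^+ 2)%g = b (g ^+ 2)%g -> a = b.
Proof. by move=> a1 ag ag2; apply/ffunP => x; case: (c3_elemP x) => ->. Qed.

Lemma c3_ffun2P (T T' : GA2 K gT) :
  (forall x y, x \in [:: 1%g; g; g ^+ 2]%g -> y \in [:: 1%g; g; g ^+ 2]%g ->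
     T (x, y) = T' (x, y)) -> T = T'.
Proof.
move=> TT'; apply/ffunP => -[x y]; apply: TT';
  [case: (c3_elemP x) => -> | case: (c3_elemP y) => ->]; by rewrite !inE eqxx ?orbT.
Qed.

Ltac c3_simp := rewrite ?ffunE /= ?(mul1g, mulg1, invg1, expg1, expg0, mulg_g_g2,
  mulg_g2_g, mulg_g2_g2, invg_g, invg_g2, eqxx, g_eq1, g2_eq1, g_eq_g2,
  (eq_sym 1%g g), (eq_sym 1%g (g ^+ 2)%g), (eq_sym (g ^+ 2)%g g)) -?expg2 /=.

Lemma c3eltE (a : GAK) : a = c3elt g (a 1%g) (a g) (a (g ^+ 2)%g).
Proof. by apply: c3_ffunP; rewrite /c3elt /ga_delta; c3_simp; ring. Qed.

Lemma c3elt1 (a0 a1 a2 : K) : c3elt g a0 a1 a2 1%g = a0.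
Proof. by rewrite /c3elt /ga_delta; c3_simp; ring. Qed.

Lemma c3eltg (a0 a1 a2 : K) : c3elt g a0 a1 a2 g = a1.
Proof. by rewrite /c3elt /ga_delta; c3_simp; ring. Qed.

Lemma c3eltg2 (a0 a1 a2 : K) : c3elt g a0 a1 a2 (g ^+ 2)%g = a2.
Proof. by rewrite /c3elt /ga_delta; c3_simp; ring. Qed.

Lemma c3elt_inj (a0 a1 a2 b0 b1 b2 : K) :
  c3elt g a0 a1 a2 = c3elt g b0 b1 b2 -> [/\ a0 = b0, a1 = b1 & a2 = b2].
Proof.
move=> ab; split.
- by rewrite -(c3elt1 a0 a1 a2) ab c3elt1.
- by rewrite -(c3eltg a0 a1 a2) ab c3eltg.
- by rewrite -(c3eltg2 a0 a1 a2) ab c3eltg2.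
Qed.

Lemma ga_one_c3 : ga_one K gT = c3elt g 1 0 0.
Proof. by apply: c3_ffunP; rewrite /c3elt /ga_one /ga_delta; c3_simp; ring. Qed.

Lemma ga_mul_c3 (a0 a1 a2 b0 b1 b2 : K) :
  ga_mul (c3elt g a0 a1 a2) (c3elt g b0 b1 b2) =
  c3elt g (a0 * b0 + a1 * b2 + a2 * b1) (a0 * b1 + a1 * b0 + a2 * b2)
          (a0 * b2 + a1 * b1 + a2 * b0).
Proof.
apply: c3_ffunP; rewrite /ga_mul !ffunE !c3_sumE /c3elt /ga_delta; c3_simp; ring.
Qed.

Lemma ga_linear_c3elt (f : GAK -> GAK) : ga_linear f -> forall a0 a1 a2 : K,
  f (c3elt g a0 a1 a2) =
  [ffun x => a0 * f (delta 1%g) x + a1 * f (delta g) x + a2 * f (delta (g ^+ 2)%g) x].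
Proof.
move=> fL a0 a1 a2; pose z : GAK := [ffun=> 0].
have fz : f z = z.
  have -> : z = [ffun x => -1 * z x + z x] by apply/ffunP => x; rewrite !ffunE; ring.
  by rewrite fL; apply/ffunP => x; rewrite !ffunE; ring.
have -> : c3elt g a0 a1 a2 = [ffun x => a0 * delta 1%g x + [ffun y => a1 * delta g y +
    [ffun t => a2 * delta (g ^+ 2)%g t + z t] y] x].
  by apply/ffunP => x; rewrite !ffunE addr0 addrA.
by rewrite !fL fz; apply/ffunP => x; rewrite !ffunE addr0 addrA.
Qed.

Lemma eq_c3_linear (f f' : GAK -> GAK) : ga_linear f -> ga_linear f' ->
  (forall k, f (delta (g ^+ k)%g) = f' (delta (g ^+ k)%g)) -> f =1 f'.
Proof.
move=> fL f'L ff' a; rewrite [a]c3eltE !ga_linear_c3elt //.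
by have := ff' 0%N; have := ff' 1%N; have := ff' 2%N; rewrite expg0 expg1 => -> -> ->.
Qed.

Lemma mul_map_comul_one : mul_map (ga_comul (ga_one K gT)) = c3elt g 3 0 0.
Proof.
by apply: c3_ffunP; rewrite /mul_map /ga_comul !ffunE !c3_sum2E !ga_mul_delta
  /ga_one /c3elt /ga_delta; c3_simp; ring.
Qed.

Section Twist.
Variable w : K.

(* The linear map with g^k |-> w^k g^(2k), in coordinates. *)
Definition c3_twist (a : GAK) : GAK :=
  c3elt g (a 1%g) (w ^+ 2 * a (g ^+ 2)%g) (w * a g).

Lemma c3_twist_linear : ga_linear c3_twist.
Proof.
by move=> c a b; apply: c3_ffunP; rewrite /c3_twist /c3elt /ga_delta; c3_simp; ring.
Qed.

Lemma c3_twist_one : c3_twist (ga_one K gT) = ga_one K gT.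
Proof. by apply: c3_ffunP; rewrite /c3_twist /c3elt /ga_one /ga_delta; c3_simp; ring. Qed.

Lemma c3_twist_counit (a : GAK) : ga_counit (c3_twist a) = ga_counit a.
Proof. exact: c3elt1. Qed.

Lemma c3_twist_delta_g : c3_twist (delta g) = [ffun x => w * delta (g ^+ 2)%g x].
Proof. by apply: c3_ffunP; rewrite /c3_twist /c3elt /ga_delta; c3_simp; ring. Qed.

Hypothesis cube_w : w ^+ 3 = 1.

Lemma c3_twist_mul (a b : GAK) :
  c3_twist (ga_mul a b) = ga_mul (c3_twist a) (c3_twist b).
Proof.
rewrite [a]c3eltE [b]c3eltE ga_mul_c3 /c3_twist !(c3elt1, c3eltg, c3eltg2) ga_mul_c3.
by congr c3elt; ring: cube_w.
Qed.

Lemma c3_twistK : involutive c3_twist.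
Proof.
by move=> a; apply: c3_ffunP; rewrite /c3_twist !(c3elt1, c3eltg, c3eltg2); ring: cube_w.
Qed.

Lemma c3_twist_comul (a : GAK) :
  ga_comul (c3_twist a) = tensor_map c3_twist c3_twist (ga_comul a).
Proof.
apply: c3_ffun2P => x y; rewrite !inE => /or3P[]/eqP-> /or3P[]/eqP->;
  by rewrite /c3_twist /ga_comul /tensor_map !ffunE !c3_sum2E /c3elt /ga_delta;
     c3_simp; ring: cube_w.
Qed.

Lemma c3_twist_frobenius : frobenius_morphism c3_twist.
Proof.
split; [exact: c3_twist_linear | exact: c3_twist_one | exact: c3_twist_mul
       | exact: c3_twist_comul | exact: c3_twist_counit].
Qed.

Lemma c3_twist_delta_expg (k : nat) :
  c3_twist (delta (g ^+ k)%g) = [ffun x => w ^+ k * delta (g ^+ (2 * k))%g x].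
Proof.
by rewrite (ga_morph_delta_expg c3_twist_one c3_twist_mul c3_twist_delta_g) expgM.
Qed.

Lemma mul_map_twist_comul_one :
  mul_map (tensor_map c3_twist id (ga_comul (ga_one K gT))) = c3elt g 1 w (w ^+ 2).
Proof.
by apply: c3_ffunP; rewrite /c3_twist /mul_map /tensor_map /ga_comul !ffunE !c3_sum2E
  !ga_mul_delta /ga_one /c3elt /ga_delta; c3_simp; rewrite !c3_sum2E; c3_simp; ring: cube_w.
Qed.

End Twist.

Hypothesis two_neq0 : (2 : K) != 0.

Lemma frobenius_involution_delta_g (phi : GAK -> GAK) :
  frobenius_morphism phi -> involutive phi ->
  phi (delta g) = delta g \/
  exists2 w : K, w ^+ 3 = 1 & phi (delta g) = [ffun x => w * delta (g ^+ 2)%g x].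
Proof.
move=> [phiL phi1 phiM _ phiE] phiK.
have [a [b phigE]] : exists a b, phi (delta g) = c3elt g 0 a b.
  exists (phi (delta g) g), (phi (delta g) (g ^+ 2)%g).
  rewrite {1}[phi _]c3eltE; congr c3elt.
  by have := phiE (delta g); rewrite /ga_counit => ->; rewrite /ga_delta ffunE eq_sym g_eq1.
have phig2E : phi (delta (g ^+ 2)%g) = c3elt g (2 * (a * b)) (b ^+ 2) (a ^+ 2).
  by rewrite expg2 -ga_mul_delta phiM phigE ga_mul_c3; congr c3elt; ring.
have ab0 : a * b = 0.
  have := phiE (delta (g ^+ 2)%g); rewrite /ga_counit phig2E c3elt1 /ga_delta ffunE.
  by rewrite eq_sym g2_eq1 => /eqP; rewrite mulf_eq0 (negbTE two_neq0) => /eqP.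
have cube_ab : a ^+ 3 + b ^+ 3 = 1.
  have := phiM (delta g) (delta (g ^+ 2)%g).
  rewrite ga_mul_delta mulg_g_g2 -[delta 1%g]/(ga_one K gT) phi1 phigE phig2E.
  by rewrite ga_mul_c3 ga_one_c3 => /c3elt_inj[-> _ _]; ring.
have [a0|b0] : a = 0 \/ b = 0 by apply/pred2P; rewrite -mulf_eq0 ab0.
  right; exists b; first by rewrite -cube_ab a0; ring.
  by rewrite phigE a0; apply/ffunP => x; rewrite !ffunE; ring.
left; have cube_a : a ^+ 3 = 1 by rewrite -cube_ab b0; ring.
have sqr_a : a ^+ 2 = 1.
  have := phiK (delta g); rewrite phigE b0 ga_linear_c3elt //.
  move/(congr1 (fun u : GAK => u g)); rewrite !ffunE phigE c3eltg eqxx.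
  by move=> e; apply: etrans e; ring.
have a1 : a = 1 by rewrite -cube_a exprS sqr_a mulr1.
by rewrite phigE a1 b0; apply: c3_ffunP; rewrite !(c3elt1, c3eltg, c3eltg2) /ga_delta; c3_simp.
Qed.

Lemma frobenius_involution_c3 (phi : GAK -> GAK) :
  frobenius_morphism phi -> involutive phi ->
  phi =1 id \/ exists2 w : K, w ^+ 3 = 1 & phi =1 c3_twist w.
Proof.
move=> phiF phiK; have [phiL phi1 phiM _ _] := phiF.
case: (frobenius_involution_delta_g phiF phiK) => [phig | [w cube_w phig]].
  left; apply: eq_c3_linear => // k.
  have phig1 : phi (delta g) = [ffun x => 1 * delta g x].
    by rewrite phig; apply/ffunP => x; rewrite !ffunE mul1r.
  rewrite (ga_morph_delta_expg phi1 phiM phig1).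
  by apply/ffunP => x; rewrite !ffunE expr1n mul1r.
right; exists w => //; apply: eq_c3_linear (c3_twist_linear w) _ => // k.
by rewrite (ga_morph_delta_expg phi1 phiM phig) c3_twist_delta_expg // expgM.
Qed.

Variable s : K.
Hypotheses (three_neq0 : (3 : K) != 0) (sqr_s : s ^+ 2 = 3).

Local Ltac nonzero := rewrite ?two_neq0 ?three_neq0 ?(sqrt3_neq0 three_neq0 sqr_s) ?andbT //.

Lemma extended_structure_id (theta : GAK) :
  extended_structure id theta <-> ga_mul theta theta = c3elt g 3 0 0.
Proof.
rewrite /extended_structure tensor_map_id mul_map_comul_one.
by split=> [[_ _ _ <-] // | sq]; split=> //; exact: frobenius_morphism_id.
Qed.

Lemma c3_sqrt_3e (theta : GAK) :
  ga_mul theta theta = c3elt g 3 0 0 <->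
  [\/ theta = c3elt g s 0 0, theta = c3elt g (- s) 0 0,
      exists2 w : K, w ^+ 3 = 1 & theta = c3elt g (s^-1) (- (2 * w) / s) (- (2 * w ^+ 2) / s)
    | exists2 w : K, w ^+ 3 = 1 & theta = c3elt g (- s^-1) (2 * w / s) (2 * w ^+ 2 / s)].
Proof.
split; last first.
  case=> [-> | -> | [w cube_w ->] | [w cube_w ->]]; rewrite ga_mul_c3; congr c3elt;
  by [ring: sqr_s | field: cube_w sqr_s; nonzero].
have := c3eltE theta; move: (theta 1%g) (theta g) (theta (g ^+ 2)%g) => t0 t1 t2 ->.
rewrite ga_mul_c3 => /c3elt_inj[E0 E1 E2].
have [[-> [-> [->|->]]] | [w [cube_w [[-> [-> ->]] | [-> [-> ->]]]]]] :=
  sqrt3_coords two_neq0 three_neq0 sqr_s E0 E1 E2.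
- exact: Or41.
- exact: Or42.
- by apply: Or43; exists w.
- by apply: Or44; exists w.
Qed.

Lemma extended_structure_twist (w : K) (theta : GAK) : w ^+ 3 = 1 ->
  extended_structure (c3_twist w) theta <->
  theta = c3elt g (s^-1) (w / s) (w ^+ 2 / s) \/
  theta = c3elt g (- s^-1) (- w / s) (- w ^+ 2 / s).
Proof.
move=> cube_w; rewrite /extended_structure mul_map_twist_comul_one //.
split=> [[_ _ fixed sq] | thetaE].
  have := fixed (ga_one K gT); rewrite ga_mulr1; move: sq.
  have := c3eltE theta; move: (theta 1%g) (theta g) (theta (g ^+ 2)%g) => t0 t1 t2 ->.
  rewrite ga_mul_c3 => /c3elt_inj[E0 E1 _] /(congr1 (fun a : GAK => a (g ^+ 2)%g)).
  rewrite /c3_twist !c3eltg2 c3eltg => t2E.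
  have [[-> [-> ->]] | [-> [-> ->]]] :=
    twisted_sqrt_coords three_neq0 sqr_s cube_w (esym t2E) (esym E0) (esym E1).
  - by left.
  - by right.
split; [exact: c3_twist_frobenius | exact: c3_twistK | move=> a | ].
  rewrite [a]c3eltE; case: thetaE => ->; rewrite ga_mul_c3 /c3_twist !(c3elt1, c3eltg, c3eltg2);
  by congr c3elt; field: cube_w; nonzero.
by case: thetaE => ->; rewrite ga_mul_c3; congr c3elt; field: cube_w sqr_s; nonzero.
Qed.

Lemma extended_structure_c3_family (phi : GAK -> GAK) (theta : GAK) :
  extended_structure phi theta <-> exists i, (i < 6)%N /\ c3_family g s i phi theta.
Proof.
split=> [ext | [i [_ fam]]].
  have [phiF phiK _ _] := ext; have [phiL _ _ _ _] := phiF.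
  have [phi_id | [w cube_w phi_tw]] := frobenius_involution_c3 phiF phiK.
    move/(eq_extended_structure theta phi_id)/extended_structure_id/c3_sqrt_3e: ext.
    case=> [thetaE | thetaE | [w cube_w thetaE] | [w cube_w thetaE]].
    - by exists 0%N.
    - by exists 1%N.
    - by exists 2%N; do 2!split=> //; exists w.
    - by exists 3%N; do 2!split=> //; exists w.
  have phi_delta k : phi (delta (g ^+ k)%g) = [ffun x => w ^+ k * delta (g ^+ (2 * k))%g x].
    by rewrite phi_tw c3_twist_delta_expg.
  move/(eq_extended_structure theta phi_tw)/(extended_structure_twist _ cube_w): ext.
  by case=> thetaE; [exists 4%N | exists 5%N]; split=> //; exists w.
have phi_tw w : w ^+ 3 = 1 -> ga_linear phi ->
    (forall k, phi (delta (g ^+ k)%g) = [ffun x => w ^+ k * delta (g ^+ (2 * k))%g x]) ->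
    phi =1 c3_twist w.
  move=> cube_w phiL phi_delta; apply: eq_c3_linear phiL (c3_twist_linear w) _ => k.
  by rewrite phi_delta c3_twist_delta_expg.
move: i fam => [|[|[|[|[|[|i]]]]]] //=.
1-4: case=> phi_id thetaE;
  apply/(eq_extended_structure theta phi_id)/extended_structure_id/c3_sqrt_3e.
5,6: case=> w [cube_w [phiL [phi_delta thetaE]]];
  apply/(eq_extended_structure theta (phi_tw w cube_w phiL phi_delta));
  apply/(extended_structure_twist _ cube_w).
- exact: Or41.
- exact: Or42.
- by apply: Or43; case: thetaE => w [cube_w ->]; exists w.
- by apply: Or44; case: thetaE => w [cube_w ->]; exists w.
- by left.
- by right.
Qed.

(* The counit of theta in the family i; families 4 and 5 share it with 2 and 3. *)
Definition c3_family_counit (i : nat) : K :=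
  nth 0 [:: s; - s; s^-1; - s^-1] (if (i < 4)%N then i else (i - 2)%N).

Lemma c3_family_index (i : nat) (phi : GAK -> GAK) (theta : GAK) :
  c3_family g s i phi theta -> (i < 6)%N.
Proof. by case: i => [|[|[|[|[|[|i]]]]]]. Qed.

Lemma c3_family_counitE (i : nat) (phi : GAK -> GAK) (theta : GAK) :
  c3_family g s i phi theta -> ga_counit theta = c3_family_counit i.
Proof.
rewrite /ga_counit; case: i => [|[|[|[|[|[|i]]]]]] //=.
1,2: by case=> _ ->; rewrite c3elt1.
1,2: by case=> _ [w [_ ->]]; rewrite c3elt1.
1,2: by case=> w [_ [_ [_ ->]]]; rewrite c3elt1.
Qed.

Lemma c3_family_id (i : nat) (phi : GAK -> GAK) (theta : GAK) :
  c3_family g s i phi theta -> phi =1 id <-> (i < 4)%N.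
Proof.
case: i => [|[|[|[|[|[|i]]]]]] //=.
1-4: by case=> phi_id _.
1,2: case=> w [_ [_ [phi_delta _]]]; split=> // phi_id.
1,2: have := phi_delta 1%N; rewrite phi_id expg1 muln1 => /(congr1 (fun a : GAK => a g)).
1,2: by rewrite /= /ga_delta !ffunE eqxx g_eq_g2 mulr0 => /eqP; rewrite oner_eq0.
Qed.

Lemma c3_family_counit_inj (i j : nat) : (i < 6)%N -> (j < 6)%N ->
  (i < 4)%N = (j < 4)%N -> c3_family_counit i = c3_family_counit j -> i = j.
Proof.
move=> i6 j6; rewrite /c3_family_counit.
have [i4|i4] := ltnP i 4; have [j4|j4] := ltnP j 4 => //= _ /eqP;
  rewrite nth_uniq ?(uniq_pm_sqrt3_inv two_neq0 three_neq0 sqr_s) /=; try move/eqP; lia.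
Qed.

Lemma c3_family_ext_isomorphic (i j : nat) (phi phi' : GAK -> GAK) (theta theta' : GAK) :
  c3_family g s i phi theta -> c3_family g s j phi' theta' ->
  ext_isomorphic phi theta phi' theta' -> i = j.
Proof.
move=> fam_i fam_j iso.
apply: c3_family_counit_inj (c3_family_index fam_i) (c3_family_index fam_j) _ _.
  have same_id := ext_isomorphic_id iso.
  by apply/idP/idP => [/(c3_family_id fam_i)/same_id/(c3_family_id fam_j)
                     | /(c3_family_id fam_j)/same_id/(c3_family_id fam_i)].
by rewrite -(c3_family_counitE fam_i) -(c3_family_counitE fam_j) (ext_isomorphic_counit iso).
Qed.

End CyclicGroupOfOrder3.

Theorem mainTheorem6 (K : closedFieldType) (HK : [pchar K] =i pred0)
    (gT : finGroupType) (g : gT) (Hg : #[g]%g = 3%N)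
    (Hgen : <[g]>%g = [set: gT]) (s : K) (Hs : s ^+ 2 = 3) :
  (forall (phi : GA K gT -> GA K gT) (theta : GA K gT),
      extended_structure phi theta <->
      exists i : nat, (i < 6)%N /\ c3_family g s i phi theta)
  /\
  (forall (i j : nat) (phi phi' : GA K gT -> GA K gT) (theta theta' : GA K gT),
      c3_family g s i phi theta -> c3_family g s j phi' theta' ->
      ext_isomorphic phi theta phi' theta' -> i = j).
Proof.
have two_neq0 : (2 : K) != 0 by rewrite ((pcharf0P K).1 HK).
have three_neq0 : (3 : K) != 0 by rewrite ((pcharf0P K).1 HK).
split=> [phi theta | i j phi phi' theta theta'].
  exact: extended_structure_c3_family.
exact: c3_family_ext_isomorphic.
Qed.
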